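(* Let $l_1,m_1,l_2,m_2,n$ be positive integers with $l_1\le m_1<l_2\le m_2$. Let $\Psi(l_1,m_1,l_2,m_2,n)$ be the number of subsets $X\subseteq[l_1,m_1]\cup[l_2,m_2]$ with $l_1\in X$, $l_2\in X$ and $\gcd(X\cup\{n\})=1$, and for an integer $k\ge 2$ let $\Psi_k(l_1,m_1,l_2,m_2,n)$ be the number of such subsets that moreover have exactly $k$ elements. Then \[ \text{(a)}\quad \Psi(l_1,m_1,l_2,m_2,n)=\sum_{d\mid \gcd(l_1,l_2,n)}\mu(d)\,2^{\lfloor m_1/d\rfloor+\lfloor m_2/d\rfloor-(l_1+l_2)/d}, \] \[ \text{(b)}\quad \Psi_k(l_1,m_1,l_2,m_2,n)=\sum_{d\mid \gcd(l_1,l_2,n)}\mu(d)\binom{\lfloor m_1/d\rfloor+\lfloor m_2/d\rfloor-(l_1+l_2)/d}{k-2}. \]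
   Context: $[l,m]=\{l,l+1,\ldots,m\}$ for positive integers $l\le m$. $\mu$ is the Möbius function, $\lfloor x\rfloor$ the floor function, and $\gcd(S)$ the greatest common divisor of a finite nonempty set $S$ of positive integers. *)

From HB Require Import structures.
From mathcomp Require Import all_boot all_order all_algebra.
Set Implicit Arguments. Unset Strict Implicit. Unset Printing Implicit Defensive.
Import Order.TTheory GRing.Theory Num.Theory.

(* Moebius function: mu(n) = (-1)^(number of prime factors) if n is squarefree,
   0 otherwise (mu(1) = 1). Only used for n >= 1. *)
Definition mobius (n : nat) : int :=
  if all (fun p => logn p n == 1%N) (primes n)
  then ((-1) ^+ size (primes n))%R else 0%R.

Definition gcd_set (N : nat) (X : {set 'I_N}) : nat :=
  \big[gcdn/0%N]_(x in X) (val x).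

Definition admissible (l1 m1 l2 m2 n : nat) (X : {set 'I_m2.+1}) : bool :=
  [&& [forall x in X, ((l1 <= x <= m1) || (l2 <= x <= m2))%N],
      [exists x in X, val x == l1],
      [exists x in X, val x == l2] &
      gcdn (gcd_set X) n == 1%N].

Definition Psi (l1 m1 l2 m2 n : nat) : nat :=
  #|[set X : {set 'I_m2.+1} | @admissible l1 m1 l2 m2 n X]|.

Definition Psi_k (k l1 m1 l2 m2 n : nat) : nat :=
  #|[set X : {set 'I_m2.+1} | @admissible l1 m1 l2 m2 n X & #|X| == k]|.

From HB Require Import structures.
From mathcomp Require Import all_boot all_order all_algebra zify.
Import Order.TTheory GRing.Theory Num.Theory.
Set Implicit Arguments. Unset Strict Implicit. Unset Printing Implicit Defensive.

(* Möbius inversion over the common divisors d of l1, l2 and n reduces the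
   coprimality condition to counting, for each d, the sets X of the given shape
   whose elements are all multiples of d.  Such an X is {l1, l2} together with
   an arbitrary subset of the other multiples of d in [l1, m1] u [l2, m2], of
   which there are m1/d + m2/d - (l1 + l2)/d; hence 2 to that power such sets,
   and binomial(m1/d + m2/d - (l1 + l2)/d, k - 2) of them have k elements. *)

Lemma mobius_eq0 p d : prime p -> 0 < d -> p ^ 2 %| d -> mobius d = 0%R.
Proof.
move=> p_pr d_gt0 p2d; rewrite /mobius; case: ifP => // /allP log1.
have pd : p \in primes d by rewrite mem_primes p_pr d_gt0 (dvdn_trans _ p2d) // dvdn_exp.
by move: p2d; rewrite pfactor_dvdn // (eqP (log1 p pd)).
Qed.

Lemma mobius_mul_prime p d : prime p -> 0 < d -> ~~ (p %| d) ->
  mobius (p * d) = (- mobius d)%R.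
Proof.
move=> p_pr d_gt0 p_ndvd_d; have p_gt0 := prime_gt0 p_pr.
have logp_d : logn p d = 0 by apply/eqP; rewrite lognE p_pr d_gt0 (negbTE p_ndvd_d).
have primesM_p : perm_eq (primes (p * d)) (p :: primes d).
  apply: uniq_perm; rewrite ?primes_uniq //=.
    by rewrite primes_uniq andbT mem_primes p_pr d_gt0.
  by move=> q; rewrite primesM // primes_prime // !inE.
have logn_pd q : q \in primes d -> logn q (p * d) = logn q d.
  rewrite mem_primes => /and3P[q_pr _ qd]; rewrite lognM // logn_prime //.
  by case: eqP => [eq_qp|]; [move: p_ndvd_d; rewrite -eq_qp qd | rewrite add0n].
rewrite /mobius (perm_size primesM_p) (perm_all _ primesM_p) /=.
rewrite lognM // logn_prime // eqxx logp_d.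
rewrite (@eq_in_all _ _ (fun q => logn q d == 1)); last by move=> q /logn_pd ->.
by case: (all _ _); rewrite ?oppr0 // exprS mulN1r.
Qed.

Lemma sum_mobius_divisors m : 0 < m -> (\sum_(d <- divisors m) mobius d = (m == 1)%:R)%R.
Proof.
move=> m_gt0; have [->|m_neq1] := eqVneq m 1; first by rewrite big_seq1.
have m_gt1 : 1 < m by rewrite ltn_neqAle eq_sym m_neq1.
pose p := pdiv m; have p_pr : prime p := pdiv_prime m_gt1.
have p_gt0 := prime_gt0 p_pr; have pm : p %| m := pdiv_dvd m.
(* Divisors with p^2 | d contribute nothing, and e |-> p * e matches the
   divisors prime to p with the remaining ones, flipping the sign. *)
have p_multiples : perm_eq [seq d <- divisors m | (p %| d) && ~~ (p ^ 2 %| d)]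
                           [seq p * e | e <- [seq e <- divisors m | ~~ (p %| e)]].
  apply: uniq_perm; first by rewrite filter_uniq ?divisors_uniq.
    rewrite map_inj_uniq ?filter_uniq ?divisors_uniq //.
    by move=> x y /eqP; rewrite eqn_pmul2l // => /eqP.
  move=> d; rewrite mem_filter -dvdn_divisors // -andbA.
  apply/and3P/mapP => [[pd p2d dm]|].
    exists (d %/ p); last by rewrite mulnC divnK.
    rewrite mem_filter -dvdn_divisors // (dvdn_trans (dvdn_div pd) dm) andbT.
    by apply: contra p2d => pdp; rewrite -(divnK pd) mulnC expnS expn1 dvdn_pmul2l.
  move=> [e]; rewrite mem_filter -dvdn_divisors // => /andP[p_ndvd_e em] ->.
  rewrite dvdn_mulr // Gauss_dvd ?prime_coprime ?pm ?em //.
  by rewrite expnS expn1 dvdn_pmul2l.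
rewrite (bigID (dvdn p)) /= (bigID (fun d => p ^ 2 %| d)) /= big1_seq ?add0r; last first.
  move=> d /andP[/andP[_ p2d] dm].
  by rewrite (mobius_eq0 p_pr _ p2d) // (dvdn_gt0 m_gt0) // dvdn_divisors.
rewrite -big_filter (perm_big _ p_multiples) big_map.
rewrite (eq_big_seq (fun e => - mobius e)%R) ?sumrN ?big_filter ?addNr //.
by move=> e; rewrite mem_filter -dvdn_divisors // => /andP[p_ndvd_e em];
   rewrite mobius_mul_prime // (dvdn_gt0 m_gt0).
Qed.

Section MobiusInversion.

Local Open Scope ring_scope.

Lemma coprime_mobius_sum g G n : (0 < n)%N -> (g %| G)%N ->
  (coprime g n)%:R = \sum_(d <- divisors (gcdn G n)) mobius d * (d %| g)%N%:R.
Proof.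
move=> n_gt0 gG; have Gn_gt0 : (0 < gcdn G n)%N by rewrite gcdn_gt0 n_gt0 orbT.
have gn_gt0 : (0 < gcdn g n)%N by rewrite gcdn_gt0 n_gt0 orbT.
have divisors_gcd :
    perm_eq [seq d <- divisors (gcdn G n) | (d %| g)%N] (divisors (gcdn g n)).
  apply: uniq_perm; rewrite ?filter_uniq ?divisors_uniq // => d.
  rewrite mem_filter -!dvdn_divisors // !dvdn_gcd.
  by case dg: (d %| g)%N; rewrite ?(dvdn_trans dg gG).
rewrite /coprime -sum_mobius_divisors // -(perm_big _ divisors_gcd) big_filter big_mkcond.
by apply: eq_bigr => d _; case: (d %| g)%N; rewrite ?mulr1 ?mulr0.
Qed.

Lemma card_coprime_mobius (T : finType) (R : pred T) (f : T -> nat) G n :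
    (0 < n)%N -> (forall x, R x -> f x %| G)%N ->
  #|[set x | R x && coprime (f x) n]|%:Z =
  \sum_(d <- divisors (gcdn G n)) mobius d * #|[set x | R x && (d %| f x)%N]|%:Z.
Proof.
move=> n_gt0 fG.
have cardZ (Q : pred T) : #|[set x | R x && Q x]|%:Z = \sum_(x | R x) (Q x)%:R.
  rewrite -natz -sumr_const [LHS]big_mkcond [RHS]big_mkcond; apply: eq_bigr => x _.
  by rewrite inE; case: (R x); case: (Q x).
rewrite cardZ (eq_bigr _ (fun x Rx => coprime_mobius_sum n_gt0 (fG x Rx))).
rewrite exchange_big; apply: eq_bigr => d _.
by rewrite cardZ mulr_sumr.
Qed.

End MobiusInversion.

Lemma count_dvdn_iota d l k : 0 < d -> d %| l ->
  count (dvdn d) (iota l k.+1) = ((l + k) %/ d - l %/ d).+1.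
Proof.
move=> d_gt0 dl; elim: k => [|k IHk]; first by rewrite /= dl !addn0 subnn.
rewrite -addn1 iotaD count_cat IHk /= addn0 addnS divnS //.
by rewrite addSn addnC addnBA ?leq_div2r ?leq_addr.
Qed.

Lemma card_ord_count N (P : pred nat) : #|[set x : 'I_N | P x]| = count P (iota 0 N).
Proof. by rewrite cardsE cardE /enum_mem -enumT size_filter -val_enum_ord count_map. Qed.

Lemma card_dvdn_between N d l m : 0 < d -> d %| l -> l <= m -> m < N ->
  #|[set x : 'I_N | l <= x <= m & d %| x]| = (m %/ d - l %/ d).+1.
Proof.
move=> d_gt0 dl lm mN; pose F x := (l <= x <= m) && (d %| x).
have splitN : N = l + ((m - l).+1 + (N - m.+1)) by lia.
have below : count F (iota 0 l) = 0.
  rewrite (eq_in_count (a2 := pred0)) ?count_pred0 // => x.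
  by rewrite mem_iota /F /= => xl; rewrite leqNgt xl.
have above : count F (iota (l + (m - l).+1) (N - m.+1)) = 0.
  rewrite (eq_in_count (a2 := pred0)) ?count_pred0 // => x.
  by rewrite mem_iota /F addnS subnKC // => /andP[mx _]; rewrite (leqNgt x) mx andbF.
have between : count F (iota l (m - l).+1) = count (dvdn d) (iota l (m - l).+1).
  by apply: eq_in_count => x; rewrite mem_iota addnS subnKC // ltnS /F => /andP[-> ->].
rewrite (card_ord_count N F) splitN !iotaD !count_cat add0n below above between.
by rewrite count_dvdn_iota // subnKC // add0n addn0.
Qed.

Lemma card_subsets_shift (T : finType) (B S : {set T}) (P : nat -> bool) :
    B \subset S ->
  #|[set X : {set T} | (B \subset X) && (X \subset S) && P #|X|]| =
  #|[set Y : {set T} | (Y \subset S :\: B) && P (#|Y| + #|B|)]|.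
Proof.
move=> BS; set Ys := [set Y : {set T} | (Y \subset S :\: B) && _].
have disjB Y : Y \in Ys -> [disjoint Y & B].
  by rewrite inE subsetD => /andP[/andP[_ ->]].
have addB_inj : {in Ys &, injective (fun Y => Y :|: B)}.
  move=> Y1 Y2 /disjB dis1 /disjB dis2 /(congr1 (fun X => X :\: B)).
  by rewrite !setDUl setDv !setU0 (setDidPl dis1) (setDidPl dis2).
rewrite -(card_in_imset addB_inj); apply: eq_card => X; rewrite inE.
apply/idP/imsetP => [/andP[/andP[BX XS] PX]|[Y YYs ->]].
  exists (X :\: B); last by rewrite setUC -{1}(setIidPr BX) setID.
  rewrite inE setSD //= cardsD (setIidPr BX) subnK ?subset_leq_card //.
move: (YYs); rewrite inE => /andP[YS PY].
rewrite subsetUr subUset BS (subset_trans YS (subsetDl _ _)) /=.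
by rewrite cardsU (disjoint_setI0 (disjB _ YYs)) cards0 subn0.
Qed.

Section TwoIntervals.

Variables l1 m1 l2 m2 : nat.
Hypotheses (l1_le_m1 : l1 <= m1) (m1_lt_l2 : m1 < l2) (l2_le_m2 : l2 <= m2).

Definition anchored (X : {set 'I_m2.+1}) : bool :=
  [&& [forall x in X, (l1 <= x <= m1) || (l2 <= x <= m2)],
      [exists x in X, val x == l1] & [exists x in X, val x == l2]].

Definition endpoints : {set 'I_m2.+1} := [set inord l1; inord l2].

Definition dvd_support d : {set 'I_m2.+1} :=
  [set x : 'I_m2.+1 | l1 <= x <= m1 & d %| x] :|: [set x : 'I_m2.+1 | l2 <= x <= m2 & d %| x].

Lemma l1_le_m2 : l1 <= m2.
Proof. by rewrite (leq_trans l1_le_m1) // ltnW // (leq_trans m1_lt_l2). Qed.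

Lemma mem_endpoints_anchored X : anchored X -> endpoints \subset X.
Proof.
case/and3P=> _ /exists_inP[x x1 /eqP val_x] /exists_inP[y y2 /eqP val_y].
by rewrite subUset !sub1set -val_x -val_y !inord_val x1 y2.
Qed.

Lemma anchored_dvd_gcdE d X :
  anchored X && (d %| gcd_set X) = (endpoints \subset X) && (X \subset dvd_support d).
Proof.
apply/andP/andP => [[anchX /dvdn_biggcdP dX]|[EX XS]].
  split; first exact: mem_endpoints_anchored.
  apply/subsetP => x xX; case/and3P: anchX => /forall_inP inI _ _.
  by rewrite !inE (dX x xX) !andbT inI.
have in_support x : x \in X -> ((l1 <= x <= m1) || (l2 <= x <= m2)) && (d %| x).
  by move/(subsetP XS); rewrite !inE -andb_orl.
have exists_inord l : l <= m2 -> inord l \in X -> [exists x in X, val x == l].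
  by move=> l_le_m2 lX; apply/exists_inP; exists (inord l); rewrite //= inordK.
move: EX; rewrite subUset !sub1set => /andP[l1X l2X].
split; last by apply/dvdn_biggcdP => x /in_support /andP[].
rewrite /anchored (exists_inord _ l1_le_m2 l1X) (exists_inord _ l2_le_m2 l2X) !andbT.
by apply/forall_inP => x /in_support /andP[].
Qed.

Lemma endpoints_subset_dvd_support d :
  d %| l1 -> d %| l2 -> endpoints \subset dvd_support d.
Proof.
move=> dl1 dl2; rewrite subUset !sub1set !inE !inordK ?ltnS ?l1_le_m2 //.
by rewrite dl1 dl2 !leqnn l1_le_m1 l2_le_m2 !andbT orbT.
Qed.

Lemma card_endpoints : #|endpoints| = 2.
Proof.
rewrite cards2; case: eqP => // /(congr1 val) /=.
rewrite !inordK ?ltnS ?l1_le_m2 // => l1_eq_l2.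
by move: m1_lt_l2; rewrite -l1_eq_l2 ltnNge l1_le_m1.
Qed.

Lemma card_dvd_support d : 0 < d -> d %| l1 -> d %| l2 ->
  #|dvd_support d| = (m1 %/ d - l1 %/ d).+1 + (m2 %/ d - l2 %/ d).+1.
Proof.
move=> d_gt0 dl1 dl2; rewrite cardsU (_ : _ :&: _ = set0) ?cards0 ?subn0; last first.
  apply/setP => x; rewrite !inE; apply/negbTE; apply: contraTN m1_lt_l2.
  case/andP=> /andP[/andP[_ x_le_m1] _] /andP[/andP[l2_le_x _] _].
  by rewrite -leqNgt (leq_trans l2_le_x).
by rewrite !card_dvdn_between // ltnS ?(leq_trans l1_le_m1) // ltnW // (leq_trans m1_lt_l2).
Qed.

Lemma card_dvd_support_endpoints d : 0 < d -> d %| l1 -> d %| l2 ->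
  #|dvd_support d :\: endpoints| = m1 %/ d + m2 %/ d - (l1 + l2) %/ d.
Proof.
move=> d_gt0 dl1 dl2.
rewrite cardsD (setIidPr (endpoints_subset_dvd_support dl1 dl2)) card_endpoints.
rewrite card_dvd_support // divnDl //.
have := leq_div2r d l1_le_m1; have := leq_div2r d l2_le_m2; lia.
Qed.

Lemma card_anchored_dvd d (P : pred nat) : d %| l1 -> d %| l2 ->
  #|[set X : {set 'I_m2.+1} | anchored X && P #|X| && (d %| gcd_set X)]| =
  #|[set Y : {set 'I_m2.+1} | (Y \subset dvd_support d :\: endpoints) && P (#|Y| + 2)]|.
Proof.
move=> dl1 dl2; rewrite -card_endpoints -card_subsets_shift ?endpoints_subset_dvd_support //.
apply: eq_card => X; rewrite !inE -anchored_dvd_gcdE.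
by case: (anchored X); case: (P _); case: (_ %| _); rewrite ?andbF ?andbT.
Qed.

Local Open Scope ring_scope.

Lemma card_anchored_coprime n (P : pred nat) : (0 < n)%N ->
  #|[set X : {set 'I_m2.+1} | anchored X && P #|X| && coprime (gcd_set X) n]|%:Z =
  \sum_(d <- divisors (gcdn (gcdn l1 l2) n)) mobius d *
     #|[set Y : {set 'I_m2.+1} | (Y \subset dvd_support d :\: endpoints) && P (#|Y| + 2)%N]|%:Z.
Proof.
move=> n_gt0.
rewrite (@card_coprime_mobius _ (fun X => anchored X && P #|X|) (@gcd_set _) (gcdn l1 l2)) //.
  apply: eq_big_seq => d; rewrite -dvdn_divisors ?gcdn_gt0 ?n_gt0 ?orbT // !dvdn_gcd.
  by case/andP=> /andP[dl1 dl2] _; rewrite card_anchored_dvd.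
move=> X /andP[/and3P[_ /exists_inP[x xX /eqP <-] /exists_inP[y yX /eqP <-]] _].
by rewrite dvdn_gcd (biggcdn_inf x) ?(biggcdn_inf y).
Qed.

Lemma card_admissible_mobius n (P : pred nat) (f : nat -> nat) : (0 < n)%N ->
    (forall A : {set 'I_m2.+1},
       #|[set Y : {set 'I_m2.+1} | (Y \subset A) && P (#|Y| + 2)%N]| = f #|A|) ->
  #|[set X | @admissible l1 m1 l2 m2 n X && P #|X|]|%:Z =
  \sum_(d <- divisors (gcdn (gcdn l1 l2) n))
     mobius d * (f (m1 %/ d + m2 %/ d - (l1 + l2) %/ d)%N)%:Z.
Proof.
move=> n_gt0 card_subsets_P.
rewrite (eq_card (B := [set X | anchored X && P #|X| && coprime (gcd_set X) n])); last first.
  move=> X; rewrite !inE /admissible /anchored -!andbA.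
  by case: (P _); rewrite ?andbT ?andbF.
rewrite card_anchored_coprime //; apply: eq_big_seq => d.
rewrite -dvdn_divisors ?gcdn_gt0 ?n_gt0 ?orbT // !dvdn_gcd => /andP[/andP[dl1 dl2] dn].
by rewrite card_subsets_P card_dvd_support_endpoints // (dvdn_gt0 n_gt0 dn).
Qed.

End TwoIntervals.

Local Open Scope ring_scope.

Theorem lemma1 (l1 m1 l2 m2 n : nat)
  (hl1 : (0 < l1)%N) (hn : (0 < n)%N)
  (h1 : (l1 <= m1)%N) (h2 : (m1 < l2)%N) (h3 : (l2 <= m2)%N) :
  ((Psi l1 m1 l2 m2 n)%:Z =
     \sum_(d <- divisors (gcdn (gcdn l1 l2) n))
        mobius d * (2 ^ (m1 %/ d + m2 %/ d - (l1 + l2) %/ d))%N%:Z)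
  /\
  (forall k : nat, (2 <= k)%N ->
     (Psi_k k l1 m1 l2 m2 n)%:Z =
     \sum_(d <- divisors (gcdn (gcdn l1 l2) n))
        mobius d * ('C(m1 %/ d + m2 %/ d - (l1 + l2) %/ d, k - 2))%N%:Z).
Proof.
split.
  rewrite -(@card_admissible_mobius _ _ _ _ h1 h2 h3 _ predT (fun s => 2 ^ s)%N hn) => [|A].
    by congr Posz; apply: eq_card => X; rewrite !inE andbT.
  by rewrite -card_powerset; apply: eq_card => Y; rewrite !inE andbT.
move=> k k_ge2.
rewrite -(@card_admissible_mobius _ _ _ _ h1 h2 h3 _ (pred1 k) (fun s => 'C(s, k - 2)) hn) => // A.
by rewrite -cards_draws; apply: eq_card => Y; rewrite !inE -{1}(subnK k_ge2) eqn_add2r.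
Qed.
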